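(* Let $1\le h\le d-3$, $m\in U$, and let $u=(u_{\alpha,\beta})_{\alpha+\beta\le h}$ be an element of $R_h$ at $m$, with $v^{(k)}:=u_{0,k}=(v^{(k)}_j)_{0\le j\le d-3}$ and $\tilde v^{(k)}:=(v^{(k)}_j)_{0\le j\le d-3-k}$. Then $$v^{(h)}=(-1)^hK^h\,u_{h,0}+\sum_{k=0}^{h-1}(-1)^kK^{k}\,({}_0J)\,\langle M,u\rangle_{k,h-1-k},$$ and $v^{(h)}$ is entirely determined by $\tilde v^{(h)}$ together with the $\tilde v^{(k)}$ for $k<h$.
   Context: Let $d\ge 3$, $U\subset\mathbb{C}^2$ open with coordinates $(x,y)$, and let $M$ be the $(d-1)\times(d-2)$ matrix of holomorphic functions on $U$ defined as follows. Let $F(x,y,p)=\sum_{i=0}^d a_i(x,y)p^{d-i}$, $a_i$ holomorphic, $a_0\equiv1$, with $F=\prod_{i=1}^d(p-p_i(x,y))$, the $p_i$ holomorphic and pairwise distinct at every point. A polynomial $P=\sum_{i=0}^kg_ip^i$ is identified with $(g_0,\dots,g_k)^T$; $M(P)$ is the $(h+k+1)\times(h+1)$ multiplication matrix with $0$-based entry $(i,j)$ equal to $g_{i-j}$ if $0\le i-j\le k$, else $0$. Put $K_F=F'_x+pF'_y$, $H=K_FF''_{pp}-(K_F)'_pF'_p$, $L=K_FF'_p$; take $M(F)$ of size $(3d-3)\times(2d-3)$, $M((F'_p)^2)$ of size $(3d-3)\times(d-1)$, $M(L),M(H)$ of size $(3d-3)\times(d-2)$. For a matrix $X$ with $3d-3$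 rows, $X^+$ (resp. $X^-$) is the submatrix of its first $d$ (resp. last $2d-3$) rows. $N$ is the $(d-2)\times(d-2)$ matrix with only nonzero entries $N_{j,j+1}=j$ ($1\le j\le d-3$, 1-based). $B=M^+((F'_p)^2)-M^+(F)(M^-(F))^{-1}M^-((F'_p)^2)$ (rank $d-1$), $E=(M^+(H)-M^+(L)N)-M^+(F)(M^-(F))^{-1}(M^-(H)-M^-(L)N)$, $T$ a left inverse of $B$, and $M=-TE$. $I_0$ (resp. $I^0$) is the $(d-1)\times(d-2)$ matrix formed by $\mathrm{Id}_{d-2}$ followed by (resp. preceded by) a zero row. $({}_0J)$ is the $(d-2)\times(d-1)$ matrix obtained by adding a column of zeros to the left of $\mathrm{Id}_{d-2}$, and $K:=({}_0J)I_0$ (so $K(w_0,\dots,w_{d-3})=(w_1,\dots,w_{d-3},0)$). $M'_{a,b}=\partial^{a+b}M/\partial x^a\partial y^b$, and for $\alpha+\beta\le h-1$, $\langle M,u\rangle_{\alpha,\beta}:=\sum_{\gamma=0}^\alpha\sum_{\delta=0}^\beta\binom{\alpha}{\gamma}\binom{\beta}{\delta}M'_{\alpha-\gamma,\beta-\delta}(m)u_{\gamma,\delta}$. $R_h$ (formal abelian relations of order $h$): its fiber at $m\in U$ is the set of families $(u_{\alpha,\beta})_{\alpha+\beta\le h}$ of vectors in $\mathbb{C}^{d-2}$ such that $I_0u_{\alpha+1,\beta}+I^0u_{\alpha,\beta+1}=\langle M,u\rangle_{\alpha,\beta}$ for all $\alpha+\beta\le h-1$. *)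

From mathcomp Require Import all_boot all_order all_algebra.
From mathcomp Require Import all_classical all_reals all_analysis.
From mathcomp Require Import complex.
Import Order.TTheory GRing.Theory Num.Theory.
Import numFieldNormedType.Exports.

Set Implicit Arguments.
Unset Strict Implicit.
Unset Printing Implicit Defensive.

Local Open Scope ring_scope.
Local Open Scope complex_scope.

Notation Cplx R := ((R[i])^o).
Notation C2pt R := (Cplx R * Cplx R)%type.

Section Setup.
Variable R : realType.
Local Notation C := (Cplx R).
Local Notation pt := (C2pt R).

Definition holomorphic_on (U : set pt) (f : pt -> C) : Prop :=
  forall z, U z -> differentiable f z.

Definition dx (f : pt -> C) : pt -> C :=
  fun z => derive (fun t : C => f (t, z.2)) z.1 1.
Definition dy (f : pt -> C) : pt -> C :=
  fun z => derive (fun t : C => f (z.1, t)) z.2 1.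
Definition pderiv (a b : nat) (f : pt -> C) : pt -> C := iter a dx (iter b dy f).

Variable d : nat.

(* F(x,y,p) = sum_{i=0}^d a_i(x,y) p^{d-i} as a polynomial in p *)
Definition Fpoly (a : nat -> pt -> C) (z : pt) : {poly C} :=
  \poly_(k < d.+1) a (d - k)%N z.
Definition Fx (a : nat -> pt -> C) (z : pt) : {poly C} :=
  \poly_(k < d.+1) dx (a (d - k)%N) z.
Definition Fy (a : nat -> pt -> C) (z : pt) : {poly C} :=
  \poly_(k < d.+1) dy (a (d - k)%N) z.
Definition Fp a z : {poly C} := (Fpoly a z)^`().
Definition KF a z : {poly C} := Fx a z + 'X * Fy a z.
Definition Hpoly a z : {poly C} := KF a z * (Fpoly a z)^`(2) - (KF a z)^`() * Fp a z.
Definition Lpoly a z : {poly C} := KF a z * Fp a z.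

Definition multmx (P : {poly C}) (r c : nat) : 'M[C]_(r, c) :=
  \matrix_(i < r, j < c) (if (j <= i)%N then P`_(i - j) else 0).

Definition rowblock (r c : nat) (X : 'M[C]_(r, c)) (off n : nat) : 'M[C]_(n, c) :=
  \matrix_(i < n, j < c) oapp (fun k : 'I_r => X k j) 0 (insub (off + i)%N).
Definition topmx (c : nat) (X : 'M[C]_(3 * d - 3, c)) : 'M[C]_(d, c) := rowblock X 0 d.
Definition botmx (c : nat) (X : 'M[C]_(3 * d - 3, c)) : 'M[C]_(2 * d - 3, c) :=
  rowblock X d (2 * d - 3).

Definition MF a z : 'M[C]_(3 * d - 3, 2 * d - 3) := multmx (Fpoly a z) _ _.
Definition MFp2 a z : 'M[C]_(3 * d - 3, d - 1) := multmx (Fp a z ^+ 2) _ _.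
Definition ML a z : 'M[C]_(3 * d - 3, d - 2) := multmx (Lpoly a z) _ _.
Definition MH a z : 'M[C]_(3 * d - 3, d - 2) := multmx (Hpoly a z) _ _.

(* N : only nonzero entries N_{j,j+1} = j (1-based), i.e. N_{i,i+1} = i+1 (0-based) *)
Definition Nmx : 'M[C]_(d - 2) :=
  \matrix_(i, j) (if (j : nat) == i.+1 then (i.+1)%:R else 0).

Definition Bmx a z : 'M[C]_(d, d - 1) :=
  topmx (MFp2 a z) - topmx (MF a z) *m invmx (botmx (MF a z)) *m botmx (MFp2 a z).
Definition Emx a z : 'M[C]_(d, d - 2) :=
  (topmx (MH a z) - topmx (ML a z) *m Nmx)
  - topmx (MF a z) *m invmx (botmx (MF a z)) *m (botmx (MH a z) - botmx (ML a z) *m Nmx).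
Definition Mmx a (T : pt -> 'M[C]_(d - 1, d)) z : 'M[C]_(d - 1, d - 2) :=
  - (T z *m Emx a z).
Definition Mder a T (al be : nat) (z : pt) : 'M[C]_(d - 1, d - 2) :=
  \matrix_(i, j) pderiv al be (fun w => Mmx a T w i j) z.

Definition I0low : 'M[C]_(d - 1, d - 2) := \matrix_(i, j) ((i : nat) == j)%:R.
Definition I0up : 'M[C]_(d - 1, d - 2) := \matrix_(i, j) ((i : nat) == j.+1)%:R.
Definition J0 : 'M[C]_(d - 2, d - 1) := \matrix_(i, j) ((j : nat) == i.+1)%:R.
Definition Kmx : 'M[C]_(d - 2) := J0 *m I0low.

Definition bracket a T (m : pt) (u : nat -> nat -> 'cV[C]_(d - 2)) (al be : nat)
  : 'cV[C]_(d - 1) :=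
  \sum_(g < al.+1) \sum_(e < be.+1)
     ('C(al, g) * 'C(be, e))%:R *: (Mder a T (al - g) (be - e) m *m u g e).

(* u = (u_{alpha,beta})_{alpha+beta <= h} is in the fiber of R_h at m
   (u is given as a total function; only alpha+beta <= h matters) *)
Definition in_Rh a T (h : nat) (m : pt) (u : nat -> nat -> 'cV[C]_(d - 2)) : Prop :=
  forall al be : nat, (al + be < h)%N ->
    I0low *m u al.+1 be + I0up *m u al be.+1 = bracket a T m u al be.

Definition setup (U : set pt) (a : nat -> pt -> C) (p : 'I_d -> pt -> C)
  (T : pt -> 'M[C]_(d - 1, d)) : Prop :=
  open U /\
  (forall i, (i <= d)%N -> holomorphic_on U (a i)) /\
  (forall z, U z -> a 0%N z = 1) /\
  (forall i, holomorphic_on U (p i)) /\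
  (forall z, U z -> Fpoly a z = \prod_(i < d) ('X - (p i z)%:P)) /\
  (forall z i j, U z -> i != j -> p i z != p j z) /\
  (forall i j, holomorphic_on U (fun z => T z i j)) /\
  (forall z, U z -> T z *m Bmx a z = 1%:M).

End Setup.

(* Multiplying the defining relation of R_h by (_0J), and using (_0J) I^0 = Id,
   gives u_{a,b+1} = (_0J) <M,u>_{a,b} - K u_{a+1,b}; iterating it h times from
   (0,h) down to (h,0) yields the formula.  K is the shift w |-> (w_1, ..., 0),
   so K^h u_{h,0} vanishes in the last h coordinates, while the brackets only
   involve the u_{a,b} with a + b < h.  Hence, by induction on the order a + b,
   v^(h) is fixed by its truncation and the lower orders, and the other entries
   u_{a,b} of each order are then recovered from the relation since I_0 is
   injective. *)
From mathcomp Require Import all_boot all_order all_algebra.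
From mathcomp Require Import all_classical all_reals all_analysis.
From mathcomp Require Import complex.
From mathcomp Require Import zify.
Import Order.TTheory GRing.Theory Num.Theory.
Import numFieldNormedType.Exports.
Local Open Scope ring_scope.
Local Open Scope complex_scope.

Set Implicit Arguments.
Unset Strict Implicit.
Unset Printing Implicit Defensive.

Lemma entry_scale_add_eq (K : pzRingType) m n (X X' S S' : 'M[K]_(m, n)) c i j :
  X i j = 0 -> X' i j = 0 -> S i j = S' i j ->
  (c *: X + S) i j = (c *: X' + S') i j.
Proof. by move=> X0 X'0 eqS; rewrite !mxE X0 X'0 eqS. Qed.

Section ShiftMatrices.
Variables (R : realType) (d : nat).
Local Notation C := (Cplx R).
Local Notation J0 := (J0 R d).
Local Notation I0low := (I0low R d).
Local Notation I0up := (I0up R d).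
Local Notation Kmx := (Kmx R d).

Lemma mul_J0_I0up : J0 *m I0up = 1%:M.
Proof.
apply/matrixP => i j; rewrite !mxE.
have ltiS : (i.+1 < d - 1)%N by have := ltn_ord i; lia.
rewrite (bigD1 (Ordinal ltiS)) //= big1 ?addr0 => [|l /eqP neq_l].
  by rewrite !mxE /= eqxx mul1r eqSS.
rewrite !mxE; case: (l =P i.+1 :> nat) => [eq_l|]; last by rewrite mul0r.
by case: neq_l; apply: val_inj.
Qed.

Lemma I0_solve (x y : 'cV[C]_(d - 2)) b :
  I0low *m x + I0up *m y = b -> y = J0 *m b - Kmx *m x.
Proof.
move=> <-; rewrite mulmxDr !mulmxA mul_J0_I0up mul1mx.
by rewrite addrAC subrr add0r.
Qed.

Lemma I0low_mul_entry (w : 'cV[C]_(d - 2)) (j : 'I_(d - 2)) (ltj : (j < d - 1)%N) :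
  (I0low *m w) (Ordinal ltj) 0 = w j 0.
Proof.
rewrite !mxE (bigD1 j) //= big1 ?addr0 => [|l neq_l]; first by rewrite !mxE eqxx mul1r.
rewrite !mxE /=; case: (j =P l :> nat) => [eq_l|]; last by rewrite mul0r.
by move/eqP: neq_l; case; apply: val_inj.
Qed.

Lemma I0low_inj (w w' : 'cV[C]_(d - 2)) : I0low *m w = I0low *m w' -> w = w'.
Proof.
move=> eq_w; apply/matrixP => j c; rewrite (ord1 c).
have ltj : (j < d - 1)%N by have := ltn_ord j; lia.
by rewrite -(I0low_mul_entry w ltj) -(I0low_mul_entry w' ltj) eq_w.
Qed.

Lemma Kmx_expr_entry0 k (w : 'cV[C]_(d - 2)) (i : 'I_(d - 2)) :
  (d - 2 <= i + k)%N -> (Kmx ^+ k *m w) i 0 = 0.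
Proof.
elim: k i => [|k IHk] i le_ik; first by have := ltn_ord i; lia.
rewrite exprS -mulmxE -mulmxA; move: (Kmx ^+ k *m w) IHk => v IHk.
rewrite /Kmx -mulmxA mxE big1 // => l _; rewrite !mxE.
case: (l =P i.+1 :> nat) => [eq_l|]; last by rewrite mul0r.
rewrite big1 ?mulr0 // => j _; rewrite !mxE.
case: (l =P j :> nat) => [eq_lj|]; last by rewrite mul0r.
by rewrite IHk ?mulr0 //; lia.
Qed.

End ShiftMatrices.

Section FormalAbelianRelations.
Variables (R : realType) (d : nat).
Variables (a : nat -> C2pt R -> Cplx R) (T : C2pt R -> 'M[Cplx R]_(d - 1, d)).
Variables (m : C2pt R) (h : nat).
Local Notation jet := (nat -> nat -> 'cV[Cplx R]_(d - 2)).
Local Notation br := (bracket a T m).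
Local Notation J0 := (J0 R d).
Local Notation Kmx := (Kmx R d).

Lemma eq_bracket (u u' : jet) al be :
  (forall g e, (g <= al)%N -> (e <= be)%N -> u g e = u' g e) ->
  br u al be = br u' al be.
Proof.
by move=> eq_u; apply: eq_bigr => g _; apply: eq_bigr => e _; rewrite eq_u // -ltnS.
Qed.

Lemma in_Rh_step (u : jet) al be : in_Rh a T h m u -> (al + be < h)%N ->
  u al be.+1 = J0 *m br u al be - Kmx *m u al.+1 be.
Proof. by move=> Ru lt_h; apply: I0_solve; apply: Ru. Qed.

Lemma in_Rh_expand (u : jet) k : in_Rh a T h m u -> (k <= h)%N ->
  forall j, (j <= k)%N ->
  u 0%N k = \sum_(i < j) (-1) ^+ i *: (Kmx ^+ i *m (J0 *m br u i (k - 1 - i)))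
            + (-1) ^+ j *: (Kmx ^+ j *m u j (k - j)%N).
Proof.
move=> Ru le_kh; elim=> [|j IHj] lt_jk.
  by rewrite big_ord0 add0r expr0 scale1r mul1mx subn0.
rewrite {1}IHj; last exact: ltnW.
rewrite big_ord_recr /= -addrA; congr (_ + _).
have -> : (k - j = (k - j.+1).+1)%N by lia.
have -> : (k - 1 - j = k - j.+1)%N by lia.
rewrite (in_Rh_step Ru); last by lia.
move: (J0 *m _) (u j.+1 _) => x y.
rewrite mulmxBr scalerBr; congr (_ + _).
by rewrite exprS mulN1r scaleNr exprSr -mulmxE mulmxA.
Qed.

Lemma in_Rh_v_formula (u : jet) k : in_Rh a T h m u -> (k <= h)%N ->
  u 0%N k = (-1) ^+ k *: (Kmx ^+ k *m u k 0%N)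
            + \sum_(i < k) (-1) ^+ i *: (Kmx ^+ i *m (J0 *m br u i (k - 1 - i))).
Proof. by move=> Ru le_kh; rewrite (in_Rh_expand Ru le_kh (leqnn k)) subnn addrC. Qed.

Section Uniqueness.
Variables (u u' : jet).
Hypotheses (Ru : in_Rh a T h m u) (Ru' : in_Rh a T h m u').
Variable s : nat.
Hypothesis le_sh : (s <= h)%N.
Hypothesis eq_below : forall g e, (g + e < s)%N -> u' g e = u g e.

Lemma in_Rh_v_eq :
  (forall j : 'I_(d - 2), (j <= d - 3 - s)%N -> u' 0%N s j 0 = u 0%N s j 0) ->
  u' 0%N s = u 0%N s.
Proof.
move=> eq_trunc; apply/matrixP => j c; rewrite (ord1 c).
have [le_j|lt_j] := leqP j (d - 3 - s)%N; first exact: eq_trunc _ le_j.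
have Ks_top : (d - 2 <= j + s)%N by have := ltn_ord j; lia.
rewrite (in_Rh_v_formula Ru' le_sh) (in_Rh_v_formula Ru le_sh).
apply: entry_scale_add_eq; [exact: Kmx_expr_entry0 | exact: Kmx_expr_entry0 |].
apply: (congr1 (fun M : 'cV_(d - 2) => M j 0)); apply: eq_bigr => i _.
rewrite (@eq_bracket u' u) // => g e le_g le_e.
by apply: eq_below; have := ltn_ord i; lia.
Qed.

Lemma in_Rh_order_eq :
  u' 0%N s = u 0%N s -> forall g e, (g + e = s)%N -> u' g e = u g e.
Proof.
move=> eq_v; elim=> [|g IHg] e; first by rewrite add0n => ->.
move=> sum_s; have lt_h : (g + e < h)%N by lia.
apply: I0low_inj; apply: (@addIr _ (I0up R d *m u g e.+1)).
rewrite Ru // -{1}IHg ?addnS // Ru' //.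
by apply: eq_bracket => g0 e0 le_g le_e; apply: eq_below; lia.
Qed.

End Uniqueness.

Lemma in_Rh_eq_trunc (u u' : jet) : in_Rh a T h m u -> in_Rh a T h m u' ->
  (forall k (j : 'I_(d - 2)), (k <= h)%N -> (j <= d - 3 - k)%N ->
     u' 0%N k j 0 = u 0%N k j 0) ->
  forall s, (s <= h.+1)%N -> forall g e, (g + e < s)%N -> u' g e = u g e.
Proof.
move=> Ru Ru' eq_trunc; elim=> [//|s IHs] lt_sh g e.
have {}IHs := IHs (ltnW lt_sh); rewrite ltnS leq_eqVlt => /predU1P[sum_s|]; last exact: IHs.
apply: (in_Rh_order_eq Ru Ru' lt_sh IHs) => //.
by apply: in_Rh_v_eq => // j; apply: eq_trunc.
Qed.

End FormalAbelianRelations.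

Theorem theorem3 (R : realType) (d : nat) (U : set (C2pt R))
  (a : nat -> C2pt R -> Cplx R) (p : 'I_d -> C2pt R -> Cplx R)
  (T : C2pt R -> 'M[Cplx R]_(d - 1, d))
  (h : nat) (m : C2pt R) (u : nat -> nat -> 'cV[Cplx R]_(d - 2)) :
  (3 <= d)%N ->
  setup U a p T ->
  (1 <= h)%N -> (h <= d - 3)%N ->
  U m ->
  in_Rh a T h m u ->
  (* v^(h) = (-1)^h K^h u_{h,0} + sum_{k<h} (-1)^k K^k (_0 J) <M,u>_{k,h-1-k} *)
  u 0%N h = (-1) ^+ h *: (Kmx R d ^+ h *m u h 0%N)
            + \sum_(k < h) (-1) ^+ k *:
                 (Kmx R d ^+ k *m (J0 R d *m bracket a T m u k (h - 1 - k)))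
  /\
  (* v^(h) is determined by the truncations ~v^(k), k <= h, among elements of R_h at m *)
  (forall u' : nat -> nat -> 'cV[Cplx R]_(d - 2),
     in_Rh a T h m u' ->
     (forall (k : nat) (j : 'I_(d - 2)), (k <= h)%N -> (j <= d - 3 - k)%N ->
        u' 0%N k j 0 = u 0%N k j 0) ->
     u' 0%N h = u 0%N h).
Proof.
move=> _ _ _ _ _ Ru; split; first exact: in_Rh_v_formula Ru (leqnn h).
move=> u' Ru' eq_trunc.
exact: (in_Rh_eq_trunc Ru Ru' eq_trunc (leqnn h.+1)).
Qed.
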